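(* Let $G$ be a completely multipartite vertex-weighted multigraph such that every vertex $v$ of $G$ satisfies $\mathrm{rdeg}(v)\geq 4$ and $\mathrm{wt}(v)\geq 2$. Then $G$ is admissibly contractible.
   Context: A vertex-weighted multigraph is $G=(V,E,r,\mathrm{wt})$ with $V$ a finite vertex set, $E$ a finite edge set, $r$ assigning to each edge an unordered pair of distinct vertices, $\mathrm{wt}:V\to\mathbb{Z}$. $\deg(v)$ is the number of edges incident to $v$, $\mathrm{rdeg}(v)$ the number of vertices adjacent to $v$. $G$ is completely multipartite if there is no triple of vertices $v_1,v_2,v_3$ with $\{v_1,v_2\}$, $\{v_1,v_3\}$ non-adjacent but $\{v_2,v_3\}$ adjacent. For adjacent $v,w$, the contraction with respect to $\{v,w\}$ identifies $v,w$ to a vertex of weight $\mathrm{wt}(v)+\mathrm{wt}(w)$, deletes edges between $v$ and $w$, keeps other edges and weights. With $m$ the number of edges between $v,w$, the contraction is admissible if, for some labeling of the pair as $v,w$, there is an integer $0\leq l<m$ with: every vertex $x\notin\{v,w\}$ has $\deg(x)\geq 3$; $\mathrm{wt}(v)\geq l+1$, $\mathrm{wt}(w)\geq l+2$; $\deg(v)-m+l\geq 3$ and $\deg(w)-m+l\geq 3$. $G$ is admissibly contractible if a finite sequence of admissible contractions turns it into a single vertex. *)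

From mathcomp Require Import all_boot all_order all_algebra.
Set Implicit Arguments. Unset Strict Implicit. Unset Printing Implicit Defensive.
Import Order.TTheory GRing.Theory Num.Theory.

(* A vertex-weighted multigraph whose vertices live in an ambient finite type T
   and whose edges live in an ambient finite type U.
   vset = V, eset = E, ends e = r(e) (an unordered pair, i.e. a 2-element set),
   wt = weight function (only its values on vset matter). *)
Record mgraph (T U : finType) := MGraph {
  vset : {set T};
  eset : {set U};
  ends : U -> {set T};
  wt   : T -> int
}.

Section Defs.
Variables (T U : finType).
Implicit Types (G : mgraph T U) (x y v w : T).

Definition wf G : Prop :=
  forall e, e \in eset G -> ends G e \subset vset G /\ #|ends G e| = 2.

Definition mult G x y : nat := #|[set e in eset G | ends G e == [set x; y]]|.

Definition adj G x y : bool :=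
  [&& x \in vset G, y \in vset G, x != y & 0 < mult G x y].

Definition deg G x : nat := #|[set e in eset G | x \in ends G e]|.

Definition rdeg G x : nat := #|[set y in vset G | adj G x y]|.

Definition complete_multipartite G : Prop :=
  forall v1 v2 v3, v1 \in vset G -> v2 \in vset G -> v3 \in vset G ->
    ~ [/\ ~~ adj G v1 v2, ~~ adj G v1 v3 & adj G v2 v3].

(* Contraction w.r.t. {v,w}: w is identified into v (the merged vertex keeps the
   name v and gets weight wt v + wt w); edges between v and w are deleted; the
   other edges are kept, with endpoint w renamed to v. *)
Definition contract G v w : mgraph T U :=
  {| vset := vset G :\ w;
     eset := [set e in eset G | ends G e != [set v; w]];
     ends := fun e => [set (if x == w then v else x) | x in ends G e];
     wt   := fun x => if x == v then (wt G v + wt G w)%R else wt G x |}.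

Definition admissible_lab G v w : Prop :=
  let m := mult G v w in
  exists l : nat, (l < m)%N /\
    (forall x, x \in vset G -> x != v -> x != w -> (3 <= deg G x)%N) /\
    (l%:Z + 1 <= wt G v)%R /\ (l%:Z + 2 <= wt G w)%R /\
    (3 <= (deg G v)%:Z - m%:Z + l%:Z)%R /\
    (3 <= (deg G w)%:Z - m%:Z + l%:Z)%R.

Definition admissible G v w : Prop :=
  adj G v w /\ (admissible_lab G v w \/ admissible_lab G w v).

Inductive contractible : mgraph T U -> Prop :=
| contr_single G : #|vset G| = 1%N -> contractible G
| contr_step G v w : admissible G v w -> contractible (contract G v w) ->
    contractible G.

End Defs.

(* Choose a path b - a - c - d. Contracting {a, b} and then {c, d} is
   admissible and produces two hubs a and c of weight at least 4, joined by at
   least two edges; by complete multipartiteness every other vertex (a spoke)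
   is adjacent to both hubs. Each spoke x is then absorbed into the hub it
   sends fewer edges to. The invariant is that the degree of a hub exceeds its
   multiplicity towards any spoke by at least 3: this makes the absorption
   admissible, and it survives the absorption because the edges from x to the
   other hub thicken the bundle between the hubs. Once only the hubs are left
   they are joined by at least four edges and one of them weighs at least 5,
   so the last contraction is admissible. *)

From mathcomp Require Import all_boot all_order all_algebra zify.
Import Order.TTheory GRing.Theory Num.Theory.
Set Implicit Arguments. Unset Strict Implicit. Unset Printing Implicit Defensive.

(* [lia] does case analysis on every boolean hypothesis in context, which blows
   up with the many vertex disequalities and memberships around. *)
Ltac arith := repeat match goal with
  | H : is_true (negb (eq_op _ _)) |- _ => clear H
  | H : is_true (in_mem _ _) |- _ => clear H
  | H : is_true (adj _ _ _) |- _ => clear H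
  end; lia.

Section Multigraph.
Variables (T U : finType).
Implicit Types (G : mgraph T U) (v w x y z : T) (S Y : {set T}).

Definition incident G v := [set e in eset G | v \in ends G e].

Definition other_end G v e := odflt v [pick z in ends G e :\ v].

Definition neighbours G v := [set y in vset G | adj G v y].

Lemma rdegE G v : rdeg G v = #|neighbours G v|.
Proof. by []. Qed.

Lemma multC G x y : mult G x y = mult G y x.
Proof. by rewrite /mult setUC. Qed.

Lemma eq_set2r x y z : x != y -> x != z -> ([set x; y] == [set x; z]) = (y == z).
Proof.
move=> xy xz; apply/eqP/eqP=> [E|-> //].
have : y \in [set x; z] by rewrite -E set22.
by rewrite !inE => /orP[/eqP yx | /eqP]; first by rewrite yx eqxx in xy.
Qed.

Lemma wf_endsP G e x : wf G -> e \in eset G -> x \in ends G e ->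
  exists2 z, z != x & ends G e = [set x; z].
Proof.
move=> G_wf eE xe; have [_ ends2] := G_wf e eE.
have /cards1P[z Ez] : #|ends G e :\ x| == 1.
  by move: ends2; rewrite (cardsD1 x) xe add1n => -[->].
exists z; last by rewrite -Ez setD1K.
have : z \in ends G e :\ x by rewrite Ez set11.
by rewrite !inE => /andP[].
Qed.

Lemma ends_eq_other_end G e v y : wf G -> e \in eset G -> v \in ends G e -> y != v ->
  (ends G e == [set v; y]) = (other_end G v e == y).
Proof.
move=> G_wf eE ve yv; have [z zv Ez] := wf_endsP G_wf eE ve.
have -> : other_end G v e = z.
  rewrite /other_end Ez setU1K ?inE 1?eq_sym //.
  by case: pickP => [t | /(_ z)]; rewrite !inE ?eqxx // => /eqP.
by rewrite Ez eq_set2r // eq_sym.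
Qed.

Lemma mult_other_end G v y : wf G -> y != v ->
  mult G v y = #|[set e in incident G v | other_end G v e == y]|.
Proof.
move=> G_wf yv; apply: eq_card => e; rewrite !inE.
case eE: (e \in eset G) => //=.
case ve: (v \in ends G e); first by rewrite ends_eq_other_end.
by apply/negbTE/eqP=> Ee; rewrite Ee set21 in ve.
Qed.

(* Edges towards [Y] are counted by multiplicity, the others by at least one
   per neighbour outside [Y]. *)
Lemma deg_ge_sum_mult G v Y : wf G -> v \notin Y ->
  \sum_(y in Y) mult G v y + (rdeg G v - #|Y|) <= deg G v.
Proof.
move=> G_wf vY; set far := [set e | other_end G v e \in Y].
rewrite -[deg G v](cardsID far (incident G v)); apply: leq_add.
  have multE y : y \in Y -> mult G v y = #|[set e in incident G v | other_end G v e == y]|.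
    by move=> yY; apply: mult_other_end => //; apply: contraNneq vY => <-.
  rewrite (eq_bigr _ multE) -sum1_card (partition_big (other_end G v) (mem Y)) /=; last first.
    by move=> e; rewrite !inE => /andP[].
  apply: eq_leq; apply: eq_bigr => y yY; rewrite -sum1_card; apply: eq_bigl => e.
  by rewrite !inE; case: (other_end G v e =P y) => [->|]; rewrite ?yY ?andbT ?andbF.
set N := [set z in vset G | adj G v z & z \notin Y].
have rdeg_le : rdeg G v - #|Y| <= #|N|.
  rewrite leq_subLR addnC; apply: leq_trans (leq_card_setU _ _); apply: subset_leq_card.
  by apply/subsetP=> z; rewrite !inE => /andP[-> ->]; case: (z \in Y).
apply: leq_trans rdeg_le (leq_trans _ (leq_imset_card (other_end G v) _)).
apply: subset_leq_card; apply/subsetP=> z; rewrite inE => /and3P[zV /and4P[vV _ vz mz] zY].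
have /set0Pn[e] : [set e in eset G | ends G e == [set v; z]] != set0.
  by rewrite -card_gt0.
rewrite inE => /andP[eE /eqP Ee].
have ve : v \in ends G e by rewrite Ee set21.
have oe : other_end G v e = z.
  by apply/eqP; rewrite -(ends_eq_other_end G_wf eE ve) ?Ee // eq_sym.
by rewrite -oe; apply: imset_f; rewrite !inE eE ve oe zY.
Qed.

Lemma rdeg_le_deg G v : wf G -> rdeg G v <= deg G v.
Proof.
move=> G_wf; have := deg_ge_sum_mult G_wf (negbT (in_set0 v)).
by rewrite big_set0 cards0 subn0.
Qed.

Lemma deg_ge_mult1 G v y : wf G -> v != y -> mult G v y + (rdeg G v - 1) <= deg G v.
Proof.
move=> G_wf vy; have vY : v \notin [set y] by rewrite inE.
by have := deg_ge_sum_mult G_wf vY; rewrite big_set1 cards1.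
Qed.

Lemma deg_ge_mult2 G v y z : wf G -> v != y -> v != z -> y != z ->
  mult G v y + mult G v z + (rdeg G v - 2) <= deg G v.
Proof.
move=> G_wf vy vz yz; have vY : v \notin [set y; z] by rewrite !inE negb_or vy.
by have := deg_ge_sum_mult G_wf vY; rewrite big_setU1 ?big_set1 ?cards2 ?inE ?yz.
Qed.

Lemma deg_ge_mult3 G v x y z : wf G -> v != x -> v != y -> v != z ->
  x != y -> x != z -> y != z -> mult G v x + mult G v y + mult G v z <= deg G v.
Proof.
move=> G_wf vx vy vz xy xz yz.
have vY : v \notin x |: [set y; z] by rewrite !inE !negb_or vx vy.
have := deg_ge_sum_mult G_wf vY.
rewrite !big_setU1 ?big_set1 ?inE ?negb_or ?xy ?xz ?yz //= addnA; exact: leq_trans (leq_addr _ _).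
Qed.

Lemma exists_adj_notin G v Y : #|Y| < rdeg G v -> exists2 y, adj G v y & y \notin Y.
Proof.
move=> Y_lt; have /set0Pn[y] : neighbours G v :\: Y != set0.
  rewrite -card_gt0; have := cardsID Y (neighbours G v).
  by have := subset_leq_card (subsetIr (neighbours G v) Y); move: Y_lt; rewrite rdegE; arith.
by rewrite !inE => /and3P[yY _ vy]; exists y.
Qed.

Lemma exists_path4 G : vset G != set0 -> (forall v, v \in vset G -> 3 <= rdeg G v) ->
  exists a b c d, [/\ adj G a b, adj G a c, adj G c d & [&& b != c, d != a & d != b]].
Proof.
move=> /set0Pn[a aV] rdeg3.
have [b ab _] : exists2 b, adj G a b & b \notin set0.
  by apply: exists_adj_notin; rewrite cards0; apply: leq_trans (rdeg3 a aV).
have [c ac] : exists2 c, adj G a c & c \notin [set b].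
  by apply: exists_adj_notin; rewrite cards1; apply: leq_trans (rdeg3 a aV).
rewrite inE eq_sym => bc; have /and4P[_ cV _ _] := ac.
have [d cd] : exists2 d, adj G c d & d \notin [set a; b].
  by apply: exists_adj_notin; apply: leq_ltn_trans (rdeg3 c cV); rewrite cards2; case: (a != b).
by rewrite !inE negb_or => dab; exists a, b, c, d; rewrite bc.
Qed.

Lemma neighbours_sub G v : neighbours G v \subset vset G :\ v.
Proof.
apply/subsetP=> z; rewrite !inE => /andP[zV /and4P[_ _ vz _]].
by rewrite zV eq_sym vz.
Qed.

Lemma rdeg_lt_card G v : v \in vset G -> rdeg G v < #|vset G|.
Proof.
move=> vV; rewrite (cardsD1 v) vV add1n ltnS.
exact: subset_leq_card (neighbours_sub G v).
Qed.

Lemma adj_of_rdeg_full G v y : v \in vset G -> #|vset G| <= (rdeg G v).+1 ->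
  y \in vset G -> y != v -> adj G v y.
Proof.
move=> vV full yV yv; have /eqP N_full : neighbours G v == vset G :\ v.
  rewrite eqEcard neighbours_sub /= -ltnS -add1n.
  by move: full; rewrite rdegE (cardsD1 v) vV.
have : y \in vset G :\ v by rewrite !inE yv.
by rewrite -N_full inE => /andP[].
Qed.

Lemma complete_multipartite_mult_gt0 G a b y : complete_multipartite G ->
  adj G a b -> y \in vset G -> 0 < mult G a y + mult G b y.
Proof.
move=> G_cm ab yV; have /and4P[aV bV _ _] := ab.
case ya: (adj G y a); first by case/and4P: ya => _ _ _; rewrite multC addn_gt0 => ->.
case yb: (adj G y b); first by case/and4P: yb => _ _ _; rewrite multC addn_gt0 orbC => ->.
by case: (G_cm y a b yV aV bV); rewrite ya yb.
Qed.

Definition relabel v w x := if x == w then v else x.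

Lemma vset_contract G v w : vset (contract G v w) = vset G :\ w.
Proof. by []. Qed.

Lemma eset_contract G v w :
  eset (contract G v w) = [set e in eset G | ends G e != [set v; w]].
Proof. by []. Qed.

Lemma ends_contract G v w e : ends (contract G v w) e = relabel v w @: ends G e.
Proof. by []. Qed.

Lemma wt_contract_merged G v w : wt (contract G v w) v = (wt G v + wt G w)%R.
Proof. by rewrite /= eqxx. Qed.

Lemma wt_contract_other G v w x : x != v -> wt (contract G v w) x = wt G x.
Proof. by move=> /negbTE /= ->. Qed.

Lemma card_vset_contract G v w : w \in vset G -> #|vset (contract G v w)| = #|vset G|.-1.
Proof. by move=> wV; rewrite vset_contract (cardsD1 w (vset G)) wV. Qed.

Lemma mem_relabel_imset v w x S : x != v -> x != w ->
  (x \in relabel v w @: S) = (x \in S).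
Proof.
move=> xv xw; apply/imsetP/idP => [[z zS xE] | xS]; last first.
  by exists x; rewrite // /relabel (negbTE xw).
by move: xv xw; rewrite xE /relabel; case: (z =P w) => [_ | _ _ _ //]; rewrite eqxx.
Qed.

Lemma mem_relabel_imset_merged v w S : (v \in relabel v w @: S) = (v \in S) || (w \in S).
Proof.
apply/imsetP/idP => [[z zS] | /orP[vS | wS]].
- by rewrite /relabel; case: eqP => [<- _ | _ ->]; rewrite zS ?orbT.
- by exists v; rewrite // /relabel; case: eqP.
- by exists w; rewrite // /relabel eqxx.
Qed.

Lemma relabel_imset_id v w S : w \notin S -> relabel v w @: S = S.
Proof.
move=> wS; rewrite -[RHS]imset_id; apply: eq_in_imset => x xS.
by rewrite /relabel; case: eqP => // xw; rewrite -xw xS in wS.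
Qed.

Lemma deg_contract_other G v w x : x != v -> x != w -> deg (contract G v w) x = deg G x.
Proof.
move=> xv xw; apply: eq_card => e; rewrite !inE ends_contract mem_relabel_imset //.
case: (e \in eset G) => //=; case xe: (x \in ends G e); rewrite ?andbF ?andbT //.
by apply/eqP=> Ee; move: xe; rewrite Ee !inE (negbTE xv) (negbTE xw).
Qed.

Lemma mult_contract_other G v w x y : x != v -> x != w -> y != v -> y != w ->
  mult (contract G v w) x y = mult G x y.
Proof.
move=> xv xw yv yw; apply: eq_card => e; rewrite !inE ends_contract.
case: (e \in eset G) => //=.
have wxy : w \notin [set x; y] by rewrite !inE !(eq_sym w) negb_or xw.
apply/andP/eqP => [[_ /eqP Ee] | Ee].
  have vS : v \notin relabel v w @: ends G e.
    by rewrite Ee !inE !(eq_sym v) (negbTE xv) (negbTE yv).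
  have wS : w \notin ends G e.
    by apply: contra vS => wS; rewrite mem_relabel_imset_merged wS orbT.
  by rewrite -Ee relabel_imset_id.
rewrite Ee relabel_imset_id //; split=> //; apply/eqP=> Evw.
have : x \in [set v; w] by rewrite -Evw set21.
by rewrite !inE (negbTE xv) (negbTE xw).
Qed.

Lemma mult_contract_merged G v w x : wf G -> v != w -> x != v -> x != w ->
  mult (contract G v w) v x = mult G v x + mult G w x.
Proof.
move=> G_wf vw xv xw.
set A := [set e in eset G | ends G e == [set v; x]].
set B := [set e in eset G | ends G e == [set w; x]].
have AB0 : A :&: B = set0.
  apply/setP=> e; rewrite !inE; apply/negbTE/negP.
  case/andP=> /andP[_ /eqP Ev] /andP[_ /eqP Ew].
  have : w \in [set v; x] by rewrite -Ev Ew set21.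
  by rewrite !inE eq_sym (negbTE vw) eq_sym (negbTE xw).
rewrite /mult -/A -/B -cardsUI AB0 cards0 addn0; apply: eq_card => e.
rewrite !inE ends_contract; case eE: (e \in eset G) => //=.
apply/andP/orP => [[Nvw /eqP Ee] | [/eqP Ee | /eqP Ee]].
- have xe : x \in ends G e by rewrite -(mem_relabel_imset _ xv xw) Ee set22.
  have [z zx Ez] := wf_endsP G_wf eE xe.
  have : relabel v w z \in relabel v w @: ends G e by apply: imset_f; rewrite Ez set22.
  rewrite Ee !inE /relabel; case: (z =P w) => [zw _ | _]; first by right; rewrite Ez zw setUC.
  by rewrite (negbTE zx) orbF => /eqP zv; left; rewrite Ez zv setUC.
- rewrite Ee relabel_imset_id; last by rewrite !inE !(eq_sym w) negb_or vw.
  have vx : v != x by rewrite eq_sym.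
  by rewrite eq_set2r // xw eqxx.
- split; last by rewrite Ee imsetU1 imset_set1 /relabel eqxx (negbTE xw).
  apply/eqP=> Evw; have : x \in [set v; w] by rewrite -Evw Ee set22.
  by rewrite !inE (negbTE xv) (negbTE xw).
Qed.

Lemma deg_contract_merged G v w : wf G -> v != w ->
  deg (contract G v w) v + 2 * mult G v w = deg G v + deg G w.
Proof.
move=> G_wf vw; set M := [set e in eset G | ends G e == [set v; w]].
have vwM : incident G v :&: incident G w = M.
  apply/setP=> e; rewrite !inE; case eE: (e \in eset G) => //=.
  apply/idP/eqP => [/andP[ve we] | ->]; last by rewrite set21 set22.
  have [z zv Ez] := wf_endsP G_wf eE ve.
  by move: we; rewrite Ez !inE eq_sym (negbTE vw) => /eqP ->.
have M_sub : M \subset incident G v :|: incident G w by rewrite -vwM subIset ?subsetUl.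
have -> : deg (contract G v w) v = #|(incident G v :|: incident G w) :\: M|.
  apply: eq_card => e; rewrite !inE ends_contract mem_relabel_imset_merged.
  by case: (e \in eset G); rewrite ?andbF //= andbC.
have -> : mult G v w = #|M| by [].
rewrite -[deg G v + _]/(#|incident G v| + #|incident G w|) -cardsUI vwM.
by rewrite -(cardsID M (_ :|: _)) (setIidPr M_sub); arith.
Qed.

Lemma wf_contract G v w : wf G -> v != w -> v \in vset G -> wf (contract G v w).
Proof.
move=> G_wf vw vV e; rewrite eset_contract ends_contract vset_contract inE.
case/andP=> eE Nvw; have [ends_sub ends2] := G_wf e eE.
case: (boolP (w \in ends G e)) => [we | Nwe]; last first.
  rewrite relabel_imset_id // ends2; split=> //; apply/subsetP=> x xe.
  by rewrite !inE (subsetP ends_sub x xe) andbT; apply: contraNneq Nwe => <-.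
have [z zw Ez] := wf_endsP G_wf eE we.
have zv : z != v by apply: contraNneq Nvw => zv; rewrite Ez zv setUC.
have zV : z \in vset G by apply: (subsetP ends_sub); rewrite Ez set22.
rewrite Ez imsetU1 imset_set1 /relabel eqxx (negbTE zw) cards2 eq_sym zv.
split=> //; apply/subsetP=> x; rewrite !inE => /orP[] /eqP ->; apply/andP; split=> //.
Qed.

Lemma admissible_lab_witness G v w l : l < mult G v w ->
  (forall x, x \in vset G -> x != v -> x != w -> 3 <= deg G x) ->
  (l%:Z + 1 <= wt G v)%R -> (l%:Z + 2 <= wt G w)%R ->
  mult G v w + 3 <= deg G v + l -> mult G v w + 3 <= deg G w + l ->
  admissible_lab G v w.
Proof. by move=> l_lt deg3 wv ww dv dw; exists l; do !split=> //; arith. Qed.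

Definition hub_slack G h y := 0 < mult G h y /\ mult G h y + 3 <= deg G h.

Definition spoke G h1 h2 y :=
  [/\ (2 <= wt G y)%R, 4 <= deg G y, hub_slack G h1 y & hub_slack G h2 y].

(* The last two numeric fields only matter once the two hubs are alone: then
   they are joined by at least four edges and one of them weighs at least 5. *)
Record hub_pair G h1 h2 : Prop := HubPair {
  hub_wf : wf G;
  hub_neq : h1 != h2;
  hub1_in : h1 \in vset G;
  hub2_in : h2 \in vset G;
  hub1_wt : (4 <= wt G h1)%R;
  hub2_wt : (4 <= wt G h2)%R;
  hub_mult : 2 <= mult G h1 h2;
  hub_spoke : forall y, y \in vset G -> y != h1 -> y != h2 -> spoke G h1 h2 y;
  hub_wt_card : (13 <= wt G h1 + wt G h2 + (2 * #|vset G|)%:Z)%R;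
  hub_mult_card : 6 <= mult G h1 h2 + #|vset G| }.

Lemma hub_slack_contract_other G v w h y : h != v -> h != w -> y != v -> y != w ->
  hub_slack G h y -> hub_slack (contract G v w) h y.
Proof. by move=> hv hw yv yw; rewrite /hub_slack mult_contract_other ?deg_contract_other. Qed.

Lemma hub_slack_contract_merged G v w y : wf G -> v != w -> y != v -> y != w ->
  0 < mult G v y + mult G w y ->
  mult G v y + mult G w y + 2 * mult G v w + 3 <= deg G v + deg G w ->
  hub_slack (contract G v w) v y.
Proof.
move=> G_wf vw yv yw; rewrite /hub_slack mult_contract_merged //.
by have := deg_contract_merged G_wf vw; arith.
Qed.

Lemma hub_pairC G h1 h2 : hub_pair G h1 h2 -> hub_pair G h2 h1.
Proof.
case=> G_wf h12 h1V h2V w1 w2 m12 sp wc mc; split; rewrite 1?eq_sym 1?multC //; try arith.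
by move=> y yV y2 y1; have [] := sp y yV y1 y2.
Qed.

Section Absorb.
Variables (G : mgraph T U) (h h' x : T).
Hypotheses (hp : hub_pair G h h') (xV : x \in vset G) (xh : x != h) (xh' : x != h').

(* The witness [l] must stay below [mult G h x]; [l = 1] is needed when two
   edges join [h] and [x] and [deg G x = 4]. *)
Lemma hub_pair_absorb_admissible : mult G h x <= mult G h' x -> admissible G h x.
Proof.
move=> closer; have [G_wf hh' hV _ wh _ _ sp _ _] := hp.
have [wx dx [mhx dh] [mh'x dh']] := sp x xV xh xh'.
have dx2 : mult G h x + mult G h' x <= deg G x.
  by have := deg_ge_mult2 G_wf xh xh' hh'; rewrite (multC G x h) (multC G x h'); arith.
split; first by rewrite /adj hV xV eq_sym xh.
right; apply: (admissible_lab_witness (l := 1 < mult G h x)); rewrite ?(multC G x h).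
- by case: ltnP mhx; arith.
- move=> z zV zx zh; case: (z =P h') => [-> | /eqP zh']; first arith.
  by have [_ dz _ _] := sp z zV zh zh'; arith.
- by case: ltnP; arith.
- by case: ltnP; arith.
- by case: ltnP; arith.
- by case: ltnP; arith.
Qed.

Lemma hub_pair_absorb : hub_pair (contract G h x) h h'.
Proof.
have [G_wf hh' hV h'V wh wh' mhh' sp wc mc] := hp.
have [wx dx [mhx dh] [mh'x dh']] := sp x xV xh xh'.
have hx : h != x by rewrite eq_sym.
have h'h : h' != h by rewrite eq_sym.
have h'x : h' != x by rewrite eq_sym.
have cardV := card_vset_contract h xV.
have V_gt0 : 0 < #|vset G| by apply/card_gt0P; exists x.
have mhh'E : mult (contract G h x) h h' = mult G h h' + mult G x h'.
  by rewrite mult_contract_merged.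
split.
- exact: wf_contract.
- exact: hh'.
- by rewrite vset_contract !inE hx.
- by rewrite vset_contract !inE h'x.
- by rewrite wt_contract_merged; arith.
- by rewrite wt_contract_other.
- by rewrite mhh'E; arith.
- move=> y; rewrite vset_contract !inE => /andP[yx yV] yh yh'.
  have [wy dy sh sh'] := sp y yV yh yh'.
  split; rewrite ?wt_contract_other ?deg_contract_other //.
    apply: hub_slack_contract_merged => //; first by case: sh; rewrite addn_gt0 => ->.
    have hy : h != y by rewrite eq_sym.
    have xy : x != y by rewrite eq_sym.
    have h'y : h' != y by rewrite eq_sym.
    have := deg_ge_mult3 G_wf hx hh' hy xh' xy h'y.
    have := deg_ge_mult3 G_wf xh xh' xy hh' hy h'y.
    by rewrite (multC G x h) (multC G x h') (multC G x y); arith.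
  exact: hub_slack_contract_other.
- by rewrite wt_contract_merged wt_contract_other // cardV; arith.
- by rewrite mhh'E cardV (multC G x h'); arith.
Qed.

End Absorb.

Lemma hub_pair_merge_admissible G h1 h2 : hub_pair G h1 h2 -> vset G = [set h1; h2] ->
  admissible G h1 h2.
Proof.
case=> G_wf h12 h1V h2V w1 w2 m12 _ wc mc V2.
have cardV : #|vset G| = 2 by rewrite V2 cards2 h12.
have d1 := deg_ge_mult1 G_wf h12.
have d2 : mult G h1 h2 <= deg G h2.
  have h21 : h2 != h1 by rewrite eq_sym.
  by have := deg_ge_mult1 G_wf h21; rewrite multC; arith.
have no_other z : z \in vset G -> z != h1 -> z != h2 -> 3 <= deg G z.
  by rewrite V2 !inE => /orP[] ->.
split; first by rewrite /adj h1V h2V h12; arith.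
case: (boolP (5 <= wt G h2)%R) => w2'.
  by left; apply: (admissible_lab_witness (l := 3)) => //; arith.
right; apply: (admissible_lab_witness (l := 3)); rewrite ?(multC G h2 h1) //; try arith.
by move=> z zV z2 z1; apply: no_other.
Qed.

Lemma hub_pair_contractible G h1 h2 : hub_pair G h1 h2 -> contractible G.
Proof.
have [n] := ubnP #|vset G|; elim: n G h1 h2 => // n IH G h1 h2 /ltnSE cardG hp.
have [x /and3P[xV xh1 xh2] | no_spoke] := pickP [pred y | [&& y \in vset G, y != h1 & y != h2]].
  wlog closer : h1 h2 hp xh1 xh2 / mult G h1 x <= mult G h2 x.
    move=> gen; case: (leqP (mult G h1 x) (mult G h2 x)) => [|/ltnW]; first exact: gen.
    exact: gen (hub_pairC hp) xh2 xh1.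
  apply: contr_step (hub_pair_absorb_admissible hp xV xh1 xh2 closer) _.
  apply: IH (hub_pair_absorb hp xV xh1 xh2).
  by rewrite card_vset_contract // -ltnS prednK ?(leq_trans _ cardG) //; apply/card_gt0P; exists x.
have V2 : vset G = [set h1; h2].
  apply/eqP; rewrite eqEsubset; apply/andP; split; apply/subsetP=> y.
    by move=> yV; move: (no_spoke y); rewrite /= yV !inE; case: (y == h1); case: (y == h2).
  by rewrite !inE => /orP[] /eqP ->; [exact: hub1_in hp | exact: hub2_in hp].
apply: contr_step (hub_pair_merge_admissible hp V2) _.
apply: contr_single; rewrite vset_contract V2 setUC setU1K ?cards1 // inE.
by rewrite eq_sym (hub_neq hp).
Qed.

End Multigraph.

Section FirstContractions.
Variables (T U : finType) (G : mgraph T U) (a b c d : T).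
Hypotheses (G_wf : wf G) (G_cm : complete_multipartite G).
Hypothesis G_rdeg_wt : forall v, v \in vset G -> 4 <= rdeg G v /\ (2 <= wt G v)%R.
Hypotheses (ab : adj G a b) (ac : adj G a c) (cd : adj G c d).
Hypotheses (bc : b != c) (da : d != a) (db : d != b).

Local Notation G1 := (contract G a b).
Local Notation G2 := (contract G1 c d).

Let aV : a \in vset G. Proof. by case/and4P: ab. Qed.
Let bV : b \in vset G. Proof. by case/and4P: ab. Qed.
Let cV : c \in vset G. Proof. by case/and4P: cd. Qed.
Let dV : d \in vset G. Proof. by case/and4P: cd. Qed.
Let a_b : a != b. Proof. by case/and4P: ab. Qed.
Let a_c : a != c. Proof. by case/and4P: ac. Qed.
Let c_d : c != d. Proof. by case/and4P: cd. Qed.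

Lemma deg_ge4 v : v \in vset G -> 4 <= deg G v.
Proof. by move=> vV; apply: leq_trans (rdeg_le_deg v G_wf); case: (G_rdeg_wt vV). Qed.

Lemma deg_pair_ge_mult v w y : v \in vset G -> w \in vset G -> v != w -> y != v -> y != w ->
  mult G v y + mult G w y + 2 * mult G v w + 4 <= deg G v + deg G w.
Proof.
move=> vV wV vw yv yw; have [rv _] := G_rdeg_wt vV; have [rw _] := G_rdeg_wt wV.
have vy : v != y by rewrite eq_sym.
have wy : w != y by rewrite eq_sym.
have wv : w != v by rewrite eq_sym.
have := deg_ge_mult2 G_wf vw vy wy; have := deg_ge_mult2 G_wf wv wy vy.
by rewrite (multC G w v); arith.
Qed.

Lemma contract_ab_admissible : admissible G a b.
Proof.
split=> //; left; apply: (admissible_lab_witness (l := 0)).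
- by case/and4P: ab.
- by move=> x xV _ _; apply: ltnW (deg_ge4 xV).
- by have [_] := G_rdeg_wt aV; arith.
- by have [_] := G_rdeg_wt bV; arith.
- by have [r _] := G_rdeg_wt aV; have := deg_ge_mult1 G_wf a_b; arith.
- have [r _] := G_rdeg_wt bV; have ba : b != a by rewrite eq_sym.
  by have := deg_ge_mult1 G_wf ba; rewrite multC; arith.
Qed.

Lemma contract_cd_admissible : admissible G1 c d.
Proof.
have ca : c != a by rewrite eq_sym.
have cb : c != b by rewrite eq_sym.
have mcdE : mult G1 c d = mult G c d by rewrite mult_contract_other.
split.
  by rewrite /adj !vset_contract !inE cb cV db dV c_d mcdE; case/and4P: cd.
left; apply: (admissible_lab_witness (l := 0)); rewrite ?mcdE.
- by case/and4P: cd.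
- move=> x; rewrite vset_contract !inE => /andP[xb xV] xc xd.
  case: (x =P a) => [-> | /eqP xa]; last by rewrite deg_contract_other //; apply: ltnW (deg_ge4 xV).
  by have := deg_contract_merged G_wf a_b; have := deg_pair_ge_mult aV bV a_b ca cb; arith.
- by rewrite wt_contract_other //; have [_] := G_rdeg_wt cV; arith.
- by rewrite wt_contract_other //; have [_] := G_rdeg_wt dV; arith.
- rewrite deg_contract_other //; have [r _] := G_rdeg_wt cV.
  by have := deg_ge_mult1 G_wf c_d; arith.
- rewrite deg_contract_other //; have [r _] := G_rdeg_wt dV; have dc : d != c by rewrite eq_sym.
  by have := deg_ge_mult1 G_wf dc; rewrite multC; arith.
Qed.

Lemma spoke_contract2 y : y \in vset G2 -> y != a -> y != c -> spoke G2 a c y.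
Proof.
rewrite !vset_contract !inE => /and3P[yd yb yV] ya yc.
have ca : c != a by rewrite eq_sym.
have cb : c != b by rewrite eq_sym.
have ad : a != d by rewrite eq_sym.
split.
- by rewrite !wt_contract_other //; case: (G_rdeg_wt yV).
- by rewrite !deg_contract_other ?deg_ge4.
- apply: hub_slack_contract_other => //.
  apply: hub_slack_contract_merged => //; first exact: complete_multipartite_mult_gt0 ab yV.
  by have := deg_pair_ge_mult aV bV a_b ya yb; arith.
- apply: hub_slack_contract_merged; rewrite ?mult_contract_other ?deg_contract_other //.
  + exact: wf_contract.
  + exact: complete_multipartite_mult_gt0 cd yV.
  + by have := deg_pair_ge_mult cV dV c_d yc yd; arith.
Qed.

Lemma hub_pair_contract2 : hub_pair G2 a c.
Proof.
have ca : c != a by rewrite eq_sym.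
have cb : c != b by rewrite eq_sym.
have ad : a != d by rewrite eq_sym.
have cV1 : c \in vset G1 by rewrite vset_contract !inE cb.
have G1_wf : wf G1 := wf_contract G_wf a_b aV.
have [[ra wa] [rb wb]] := (G_rdeg_wt aV, G_rdeg_wt bV).
have [[rc wc] [_ wd]] := (G_rdeg_wt cV, G_rdeg_wt dV).
have card5 : 5 <= #|vset G| by apply: leq_trans (rdeg_lt_card aV).
have cardG2 : #|vset G2| = #|vset G| - 2.
  by rewrite !card_vset_contract ?vset_contract ?inE ?db //; arith.
have multE : mult G2 a c = mult G a c + mult G b c + (mult G a d + mult G b d).
  rewrite multC mult_contract_merged // (multC G1 c a) (multC G1 d a).
  by rewrite !mult_contract_merged.
have m_ac : 0 < mult G a c by case/and4P: ac.
have m_d : 0 < mult G a d + mult G b d := complete_multipartite_mult_gt0 G_cm ab dV.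
split.
- exact: wf_contract.
- exact: a_c.
- by rewrite !vset_contract !inE ad a_b.
- by rewrite vset_contract in_setD1 c_d cV1.
- by rewrite wt_contract_other // wt_contract_merged; arith.
- by rewrite wt_contract_merged !wt_contract_other //; arith.
- by rewrite multE; arith.
- exact: spoke_contract2.
- rewrite wt_contract_other // !wt_contract_merged !wt_contract_other // cardG2.
  by arith.
- rewrite cardG2 multE; case: (ltnP 5 #|vset G|) => [|card_le5]; first by arith.
  have /and4P[_ _ _ m_cb] : adj G c b.
    by apply: adj_of_rdeg_full; rewrite // 1?eq_sym //; apply: leq_trans card_le5 _.
  by rewrite multC in m_cb; arith.
Qed.

End FirstContractions.

Unset Implicit Arguments.

Theorem lemma3p8 (T U : finType) (G : mgraph T U) :
  wf G ->
  vset G != set0 ->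
  complete_multipartite G ->
  (forall v, v \in vset G -> (4 <= rdeg G v)%N /\ (2 <= wt G v)%R) ->
  contractible G.
Proof.
move=> G_wf G_ne G_cm G_rdeg_wt.
have rdeg3 v : v \in vset G -> 3 <= rdeg G v by case/G_rdeg_wt => /ltnW.
have [a [b [c [d [ab ac cd /and3P[bc da db]]]]]] := exists_path4 G_ne rdeg3.
apply: contr_step (contract_ab_admissible G_wf G_rdeg_wt ab) _.
apply: contr_step (contract_cd_admissible G_wf G_rdeg_wt ab ac cd bc da db) _.
exact: hub_pair_contractible (hub_pair_contract2 G_wf G_cm G_rdeg_wt ab ac cd bc da db).
Qed.
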